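(* Suppose $f^{cl}_{\pi_\star}$ is $\delta$-ISS (for all perturbations, i.e. $\eta=\infty$) with linear gain $\gamma(x)=\gamma x$, $\gamma>0$. Fix a policy $\pi$ and $\xi\in\mathcal X$, assume $\pi,\pi_\star$ are continuously differentiable with $\|\bar\pi(x)-\bar\pi(x_0)-\partial_x\bar\pi(x_0)(x-x_0)\|\le\frac{L_{\partial\pi}}{2}\|x-x_0\|^2$ for all $x,x_0$ and $\bar\pi\in\{\pi,\pi_\star\}$, and assume $\gamma L_{\partial\pi}\ge1$. If \[\max_{0\le t\le T-1}\|\partial_x\Delta_t^{\pi_\star}(\xi;\pi)\|\le\frac1{4\gamma},\qquad\max_{0\le t\le T-1}\|\Delta_t^{\pi_\star}(\xi;\pi)\|\le\frac1{16\gamma^2L_{\partial\pi}},\] then for all $1\le t\le T$, $\|x_t^{\pi_\star}(\xi)-x_t^\pi(\xi)\|\le\max_{0\le k\le t-1}8\gamma\|\Delta_k^{\pi_\star}(\xi;\pi)\|$.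
   Context: Dynamics $x_{t+1}=f(x_t,u_t)$, $x_0=\xi$. For a policy $\pi$, $f^{cl}_\pi(x,\Delta):=f(x,\pi(x)+\Delta)$; $x_t^\pi(\xi,\{\Delta_s\})$ is the state at time $t$, $x_t^\pi(\xi):=x_t^\pi(\xi,\{0\})$; initial conditions in compact $\mathcal X$. $f^{cl}_{\pi_\star}$ is $\delta$-ISS with gain $\gamma(\cdot)$ if there is a class $\mathcal{KL}$ function $\beta$ with $\|x_t^{\pi_\star}(\xi_1;\{\Delta_s\}_{s=0}^{t-1})-x_t^{\pi_\star}(\xi_2;\{0\})\|\le\beta(\|\xi_1-\xi_2\|,t)+\gamma(\max_{0\le k\le t-1}\|\Delta_k\|)$ for all $\xi_1,\xi_2\in\mathcal X$, all $t$ and all perturbation sequences. $\Delta_t^{\pi_\star}(\xi;\pi):=\pi(x_t^{\pi_\star}(\xi))-\pi_\star(x_t^{\pi_\star}(\xi))$ and $\partial_x\Delta_t^{\pi_\star}(\xi;\pi):=\partial_x\pi(x_t^{\pi_\star}(\xi))-\partial_x\pi_\star(x_t^{\pi_\star}(\xi))$; norms are Euclidean/operator norms. *)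

From HB Require Import structures.
From mathcomp Require Import all_boot all_order all_algebra.
From mathcomp Require Import all_classical all_reals all_analysis.
Set Implicit Arguments. Unset Strict Implicit. Unset Printing Implicit Defensive.
Import Order.TTheory GRing.Theory Num.Theory numFieldNormedType.Exports.
Local Open Scope classical_set_scope.
Local Open Scope ring_scope.

Section Defs.
Variable R : realType.

Definition enorm (k : nat) (v : 'rV[R]_k) : R :=
  Num.sqrt (\sum_(i < k) v ord0 i ^+ 2).

Definition opnorm (n m : nat) (L : 'rV[R]_n -> 'rV[R]_m) : R :=
  sup [set enorm (L v) | v in [set v | enorm v <= 1]].

(* max_{0 <= k <= t-1} a k  (= 0 when t = 0) *)
Definition maxupto (a : nat -> R) (t : nat) : R := \big[Num.max/0]_(k < t) a k.

Fixpoint traj (n m : nat) (f : 'rV[R]_n -> 'rV[R]_m -> 'rV[R]_n)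
  (pi : 'rV[R]_n -> 'rV[R]_m) (xi : 'rV[R]_n) (Delta : nat -> 'rV[R]_m) (t : nat)
  : 'rV[R]_n :=
  match t with
  | 0 => xi
  | t'.+1 => let x := traj f pi xi Delta t' in f x (pi x + Delta t')
  end.

Definition classK (a : R -> R) : Prop :=
  a 0 = 0 /\ {within `[0, +oo[, continuous a} /\
  (forall r s, 0 <= r -> r < s -> a r < a s).

Definition classKL (beta : R -> nat -> R) : Prop :=
  (forall t, classK (fun r => beta r t)) /\
  (forall r, 0 <= r -> forall t s, (t <= s)%N -> beta r s <= beta r t) /\
  (forall r, 0 <= r -> (fun t => beta r t) @ \oo --> (0 : R)).

Definition deltaISS (n m : nat) (f : 'rV[R]_n -> 'rV[R]_m -> 'rV[R]_n)
  (pi : 'rV[R]_n -> 'rV[R]_m) (X : set 'rV[R]_n) (gain : R -> R) : Prop :=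
  exists beta, classKL beta /\
  forall xi1 xi2, X xi1 -> X xi2 -> forall (Delta : nat -> 'rV[R]_m) (t : nat),
    enorm (traj f pi xi1 Delta t - traj f pi xi2 (fun _ => 0) t)
      <= beta (enorm (xi1 - xi2)) t + gain (maxupto (fun k => enorm (Delta k)) t).

End Defs.

From HB Require Import structures.
From mathcomp Require Import all_boot all_order all_algebra.
From mathcomp Require Import all_classical all_reals all_analysis.
From mathcomp Require Import ring lra.
Set Implicit Arguments. Unset Strict Implicit. Unset Printing Implicit Defensive.
Import Order.TTheory GRing.Theory Num.Theory numFieldNormedType.Exports.
Local Open Scope classical_set_scope.
Local Open Scope ring_scope.

(* Running [pi] from [xi] is running [pistar] with the input perturbation
   [Delta'_k = pi (x^pi_k) - pistar (x^pi_k)], so delta-ISS from the common initial state bounds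
   the tracking error [e_t] by [gamma * max_{k<t} |Delta'_k|].  A second-order expansion of
   [pi - pistar] around [x^pistar_k] gives [|Delta'_k| <= |Delta_k| + |dDelta_k| e_k + L e_k^2],
   and under the two smallness assumptions an induction on [t] keeps [e_t <= 8 gamma M_t] with
   [M_t = max_{k<t} |Delta_k|]: the linear and quadratic terms then contribute at most [2 M_t]
   and [4 M_t]. *)

Lemma sum_mul_sqr_le (R : realFieldType) k (a b : 'I_k -> R) :
  (\sum_i a i * b i) ^+ 2 <= (\sum_i a i ^+ 2) * (\sum_i b i ^+ 2).
Proof.
have lagrange : \sum_i \sum_j (a i * b j - a j * b i) ^+ 2
    = 2 * ((\sum_i a i ^+ 2) * (\sum_i b i ^+ 2) - (\sum_i a i * b i) ^+ 2).
  have expand i j : (a i * b j - a j * b i) ^+ 2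
      = a i ^+ 2 * b j ^+ 2 + a j ^+ 2 * b i ^+ 2 - 2 * (a i * b i * (a j * b j)) by ring.
  under eq_bigr => i _ do under eq_bigr => j _ do rewrite expand.
  under eq_bigr => i _ do rewrite sumrB big_split /= -mulr_suml -!mulr_sumr.
  rewrite sumrB big_split /= -!mulr_suml -!mulr_sumr -mulr_suml.
  ring.
rewrite -subr_ge0 -(pmulr_rge0 _ (ltr0n R 2)) -lagrange.
by do 2!(apply: sumr_ge0 => ? _); exact: sqr_ge0.
Qed.

Section EuclideanNorm.
Variable R : realType.

Lemma enorm_ge0 k (v : 'rV[R]_k) : 0 <= enorm v.
Proof. exact: sqrtr_ge0. Qed.

Lemma sqr_enorm k (v : 'rV[R]_k) : enorm v ^+ 2 = \sum_i v ord0 i ^+ 2.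
Proof. by rewrite sqr_sqrtr // sumr_ge0 // => i _; exact: sqr_ge0. Qed.

Lemma enormZ k (c : R) (v : 'rV[R]_k) : enorm (c *: v) = `|c| * enorm v.
Proof.
rewrite /enorm (eq_bigr (fun i => c ^+ 2 * v ord0 i ^+ 2)) => [|i _]; last first.
  by rewrite mxE exprMn.
by rewrite -mulr_sumr sqrtrM ?sqr_ge0 // sqrtr_sqr.
Qed.

Lemma enorm0 k : enorm (0 : 'rV[R]_k) = 0.
Proof. by rewrite -(scale0r (0 : 'rV[R]_k)) enormZ normr0 mul0r. Qed.

Lemma enormN k (v : 'rV[R]_k) : enorm (- v) = enorm v.
Proof. by rewrite -scaleN1r enormZ normrN normr1 mul1r. Qed.

Lemma enorm_distC k (u v : 'rV[R]_k) : enorm (u - v) = enorm (v - u).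
Proof. by rewrite -enormN opprB. Qed.

Lemma coord_le_enorm k (v : 'rV[R]_k) i : `|v ord0 i| <= enorm v.
Proof.
rewrite -sqrtr_sqr ler_sqrt; last by rewrite -sqr_enorm sqr_ge0.
by rewrite (bigD1 i) //= lerDl sumr_ge0 // => j _; exact: sqr_ge0.
Qed.

Lemma enormD k (u v : 'rV[R]_k) : enorm (u + v) <= enorm u + enorm v.
Proof.
have cs : \sum_i u ord0 i * v ord0 i <= enorm u * enorm v.
  apply: le_trans (ler_norm _) _.
  rewrite -ler_sqr ?nnegrE ?mulr_ge0 ?enorm_ge0 // real_normK ?num_real // exprMn !sqr_enorm.
  exact: sum_mul_sqr_le.
rewrite -ler_sqr ?nnegrE ?addr_ge0 ?enorm_ge0 // sqrrD !sqr_enorm.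
rewrite (eq_bigr (fun i => u ord0 i ^+ 2 + v ord0 i ^+ 2 + 2 * (u ord0 i * v ord0 i)))
  => [|i _]; last by rewrite mxE; ring.
rewrite !big_split /= -mulr_sumr; lra.
Qed.

End EuclideanNorm.

Section OperatorNorm.
Variables (R : realType) (n m : nat).

Lemma enorm_sum (I : finType) (F : I -> 'rV[R]_m) :
  enorm (\sum_i F i) <= \sum_i enorm (F i).
Proof.
elim/big_rec2: _ => [|i s v _ IH]; first by rewrite enorm0.
by apply: le_trans (enormD _ _) _; rewrite lerD2l.
Qed.

Lemma enorm_linear_le (L : {linear 'rV[R]_n -> 'rV[R]_m}) (v : 'rV[R]_n) :
  enorm (L v) <= (\sum_j enorm (L (delta_mx 0 j))) * enorm v.
Proof.
rewrite {1}(row_sum_delta v) linear_sum.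
apply: le_trans (enorm_sum _) _.
rewrite mulr_suml; apply: ler_sum => j _.
by rewrite linearZ enormZ mulrC ler_wpM2l ?enorm_ge0 ?coord_le_enorm.
Qed.

Lemma opnorm_bound (L : {linear 'rV[R]_n -> 'rV[R]_m}) (v : 'rV[R]_n) :
  enorm (L v) <= opnorm L * enorm v.
Proof.
have le_opnorm w : enorm w <= 1 -> enorm (L w) <= opnorm L.
  move=> w1; apply: ub_le_sup; last by exists w.
  exists (\sum_j enorm (L (delta_mx 0 j))) => _ [u /= u1 <-].
  apply: le_trans (enorm_linear_le L u) _.
  by rewrite ler_piMr ?sumr_ge0 // => j _; rewrite enorm_ge0.
have [v0|v_neq0] := eqVneq (enorm v) 0.
  by have := enorm_linear_le L v; rewrite v0 !mulr0.
have v_gt0 : 0 < enorm v by rewrite lt_def v_neq0 enorm_ge0.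
have := le_opnorm ((enorm v)^-1 *: v).
rewrite linearZ !enormZ ger0_norm ?invr_ge0 ?enorm_ge0 // mulVf // lexx => /(_ isT).
by rewrite mulrC ler_pdivrMr.
Qed.

End OperatorNorm.

Section MaxUpTo.
Variable R : realType.
Implicit Types (a : nat -> R) (c : R) (s t : nat).

Lemma maxupto_ge0 a t : 0 <= maxupto a t.
Proof. exact: bigmax_ge_id. Qed.

Lemma le_maxupto a t k : (k < t)%N -> a k <= maxupto a t.
Proof. by move=> kt; exact: (le_bigmax 0 (fun i : 'I_t => a i) (Ordinal kt)). Qed.

Lemma maxupto_le a t c : 0 <= c -> (forall k, (k < t)%N -> a k <= c) -> maxupto a t <= c.
Proof. by move=> c0 ac; apply: bigmax_le => // i _; exact: ac. Qed.

Lemma maxupto_mono a s t : (s <= t)%N -> maxupto a s <= maxupto a t.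
Proof.
move=> st; apply: maxupto_le (maxupto_ge0 _ _) _ => k ks.
exact/le_maxupto/(leq_trans ks).
Qed.

Lemma maxupto_pM a c t : 0 <= c -> maxupto (fun k => c * a k) t = c * maxupto a t.
Proof. by move=> c0; rewrite /maxupto (big_morph _ (fun x y => maxr_pMr x y c0) (mulr0 c)). Qed.

End MaxUpTo.

Lemma bootstrap_step (R : realFieldType) (g L d e M : R) :
  0 < g -> 0 <= L -> 0 <= e -> e <= 8 * g * M ->
  4 * g * d <= 1 -> 16 * g ^+ 2 * L * M <= 1 ->
  d * e + L * e ^+ 2 <= 6 * M.
Proof.
move=> g0 L0 e0 eM dsmall Dsmall.
have M0 : 0 <= M by nra.
have de : d * e <= 2 * M by nra.
have e2 : e ^+ 2 <= (8 * g * M) ^+ 2 by nra.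
have : L * e ^+ 2 <= L * (8 * g * M) ^+ 2 by rewrite ler_wpM2l.
nra.
Qed.

Section Bootstrap.
Variables (R : realType) (g L : R) (e a D d : nat -> R) (T : nat).
Hypotheses (g_gt0 : 0 < g) (L_ge0 : 0 <= L) (e_ge0 : forall k, 0 <= e k).
Hypothesis e_le_gain : forall s, e s <= g * maxupto a s.
Hypothesis a_le : forall k, a k <= D k + d k * e k + L * e k ^+ 2.
Hypothesis d_small : 4 * g * maxupto d T <= 1.
Hypothesis D_small : 16 * g ^+ 2 * L * maxupto D T <= 1.

Lemma bootstrap_bound s : (s <= T)%N -> e s <= 8 * g * maxupto D s.
Proof.
have g_ge0 := ltW g_gt0.
elim/ltn_ind: s => s IH sT.
have a_le_7M : maxupto a s <= 7 * maxupto D s.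
  apply: maxupto_le => [|k ks]; first by rewrite mulr_ge0 ?maxupto_ge0.
  have kT : (k <= T)%N := ltnW (leq_trans ks sT).
  have ek : e k <= 8 * g * maxupto D s.
    apply: le_trans (IH k ks kT) _.
    by apply: ler_wpM2l; [rewrite mulr_ge0 | exact/maxupto_mono/ltnW].
  have dk : 4 * g * d k <= 1.
    apply: le_trans d_small; apply: ler_wpM2l; first by rewrite mulr_ge0.
    exact: le_maxupto (leq_trans ks sT).
  have Ds : 16 * g ^+ 2 * L * maxupto D s <= 1.
    apply: le_trans D_small; apply: ler_wpM2l; last exact: maxupto_mono.
    by rewrite !mulr_ge0 // exprn_ge0.
  have := bootstrap_step g_gt0 L_ge0 (e_ge0 k) ek dk Ds.
  have := le_maxupto D ks; have := a_le k; lra.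
apply: le_trans (e_le_gain s) _; apply: le_trans (ler_wpM2l g_ge0 a_le_7M) _.
by rewrite mulrA (mulrC g) ler_wpM2r ?maxupto_ge0 // ler_wpM2r // ler_nat.
Qed.

End Bootstrap.

Section ClosedLoop.
Variables (R : realType) (n m : nat) (f : 'rV[R]_n -> 'rV[R]_m -> 'rV[R]_n).

Lemma traj_policy_as_perturbation (pistar pi : 'rV[R]_n -> 'rV[R]_m) xi t :
  traj f pistar xi (fun k => pi (traj f pi xi (fun _ => 0) k)
                             - pistar (traj f pi xi (fun _ => 0) k)) t
  = traj f pi xi (fun _ => 0) t.
Proof. by elim: t => //= t ->; rewrite addr0 addrC subrK. Qed.

Lemma deltaISS_same_init (pi : 'rV[R]_n -> 'rV[R]_m) X gain xi :
  deltaISS f pi X gain -> X xi -> forall (Delta : nat -> 'rV[R]_m) t,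
  enorm (traj f pi xi Delta t - traj f pi xi (fun _ => 0) t)
    <= gain (maxupto (fun k => enorm (Delta k)) t).
Proof.
move=> [beta [[beta_K _] iss]] Xxi Delta t.
by have := iss xi xi Xxi Xxi Delta t; rewrite subrr enorm0 (proj1 (beta_K t)) add0r.
Qed.

End ClosedLoop.

Lemma enormB_le_remainders (R : realType) k (a b c d p q : 'rV[R]_k) :
  enorm (a - b)
    <= enorm (c - d) + enorm (p - q) + enorm (a - c - p) + enorm (b - d - q).
Proof.
have -> : a - b = (c - d) + (p - q) + (a - c - p) - (b - d - q).
  by apply/rowP => i; rewrite !mxE; ring.
rewrite -(enormN (b - d - q)).
by do 3!(apply: le_trans (enormD _ _) _; rewrite lerD2r).
Qed.

Lemma policy_gap_taylor (R : realType) n m (pi pistar : 'rV[R]_n -> 'rV[R]_m) (L : R) :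
  (forall x x0, enorm (pi x - pi x0 - 'd pi x0 (x - x0)) <= L / 2 * enorm (x - x0) ^+ 2) ->
  (forall x x0, enorm (pistar x - pistar x0 - 'd pistar x0 (x - x0))
                  <= L / 2 * enorm (x - x0) ^+ 2) ->
  forall x y, enorm (pi y - pistar y)
    <= enorm (pi x - pistar x) + opnorm (fun v => 'd pi x v - 'd pistar x v) * enorm (y - x)
       + L * enorm (y - x) ^+ 2.
Proof.
move=> taylor_pi taylor_pistar x y.
have dgap := opnorm_bound ('d pi x \- 'd pistar x) (y - x).
apply: le_trans (enormB_le_remainders _ _ (pi x) (pistar x) ('d pi x (y - x))
  ('d pistar x (y - x))) _.
apply: le_trans (lerD (lerD (lerD (lexx _) dgap) (taylor_pi y x)) (taylor_pistar y x)) _.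
by rewrite -addrA -mulrDl -splitr.
Qed.

Theorem mainTheorem5 (R : realType) (n m : nat)
  (f : 'rV[R]_n -> 'rV[R]_m -> 'rV[R]_n) (X : set 'rV[R]_n)
  (pistar pi : 'rV[R]_n -> 'rV[R]_m) (gamma Ldpi : R) (xi : 'rV[R]_n) (T : nat) :
  compact X ->
  0 < gamma ->
  deltaISS f pistar X (fun r => gamma * r) ->
  X xi ->
  (forall x, differentiable pi x) -> (forall x, differentiable pistar x) ->
  (forall v, continuous (fun x => 'd pi x v)) ->
  (forall v, continuous (fun x => 'd pistar x v)) ->
  (forall x x0, enorm (pi x - pi x0 - 'd pi x0 (x - x0))
                  <= Ldpi / 2 * enorm (x - x0) ^+ 2) ->
  (forall x x0, enorm (pistar x - pistar x0 - 'd pistar x0 (x - x0))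
                  <= Ldpi / 2 * enorm (x - x0) ^+ 2) ->
  1 <= gamma * Ldpi ->
  let xs := fun t => traj f pistar xi (fun _ => 0) t in
  let Dl := fun t => pi (xs t) - pistar (xs t) in
  let dDl := fun t => opnorm (fun v => 'd pi (xs t) v - 'd pistar (xs t) v) in
  maxupto dDl T <= 1 / (4 * gamma) ->
  maxupto (fun t => enorm (Dl t)) T <= 1 / (16 * gamma ^+ 2 * Ldpi) ->
  forall t, (1 <= t <= T)%N ->
    enorm (xs t - traj f pi xi (fun _ => 0) t)
      <= maxupto (fun k => 8 * gamma * enorm (Dl k)) t.
Proof.
move=> _ g_gt0 iss Xxi _ _ _ _ taylor_pi taylor_pistar gL xs Dl dDl dDl_small Dl_small.
move=> t /andP[_ tT].
have L_gt0 : 0 < Ldpi by rewrite -(pmulr_rgt0 _ g_gt0) (lt_le_trans ltr01).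
set xp := traj f pi xi (fun _ => 0).
have e_le_gain s : enorm (xp s - xs s)
    <= gamma * maxupto (fun k => enorm (pi (xp k) - pistar (xp k))) s.
  have := deltaISS_same_init iss Xxi (fun k => pi (xp k) - pistar (xp k)) s.
  by rewrite traj_policy_as_perturbation.
have gap_le k := policy_gap_taylor taylor_pi taylor_pistar (xs k) (xp k).
have small_gain (c M : R) : 0 < c -> M <= 1 / c -> c * M <= 1.
  by move=> c_gt0 /(ler_wpM2l (ltW c_gt0)); rewrite mul1r mulfV ?gt_eqF.
have g4_gt0 : 0 < 4 * gamma by rewrite mulr_gt0.
have g16L_gt0 : 0 < 16 * gamma ^+ 2 * Ldpi by rewrite !mulr_gt0 // exprn_gt0.
have := bootstrap_bound g_gt0 (ltW L_gt0) (fun k => enorm_ge0 _) e_le_gain gap_le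
  (small_gain _ _ g4_gt0 dDl_small) (small_gain _ _ g16L_gt0 Dl_small) tT.
by rewrite enorm_distC maxupto_pM // mulr_ge0 // ltW.
Qed.
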